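(* Let $R=\bigoplus_{n\ge0}R_n=R_0[R_1]$ be a standard graded Noetherian ring such that $R_0$ is an Artinian local ring with maximal ideal $\mathfrak{m}$ and $\mathfrak{p}:=\mathfrak{m}R$ is a prime ideal. Let $M$ be a finitely generated graded $R$-module with $\operatorname{Ass}_R M=\{\mathfrak{p}\}$. If $M_t\neq 0$ for some $t\in\mathbb{Z}$, then there exists a graded (degree-preserving) injective homomorphism $(R/\mathfrak{p})(-t)\to M$; more precisely, there is a homogeneous $x\in M_t$ with $(0):_R x=\mathfrak{p}$.
   Context: $(R/\mathfrak{p})(-t)$ denotes the shifted graded module with $((R/\mathfrak{p})(-t))_n=(R/\mathfrak{p})_{n-t}$. *)

From HB Require Import structures.
From mathcomp Require Import all_boot all_order all_algebra.
Set Implicit Arguments. Unset Strict Implicit. Unset Printing Implicit Defensive.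
Import Order.TTheory GRing.Theory Num.Theory.
Local Open Scope ring_scope.

Section CommAlg.
Variable R : comNzRingType.

Definition is_ideal (I : R -> Prop) : Prop :=
  [/\ I 0, (forall x y, I x -> I y -> I (x + y)) &
      (forall r x, I x -> I (r * x))].

Definition prime_ideal (I : R -> Prop) : Prop :=
  [/\ is_ideal I, ~ I 1 & (forall a b, I (a * b) -> I a \/ I b)].

Definition ideal_gen_seq (s : seq R) (x : R) : Prop :=
  exists c : nat -> R, x = \sum_(i < size s) c i * s`_i.

Definition noetherian : Prop :=
  forall I : R -> Prop, is_ideal I ->
    exists s : seq R, forall x, I x <-> ideal_gen_seq s x.

Definition ext_ideal (J : R -> Prop) (x : R) : Prop :=
  exists (s : seq R) (c : nat -> R),
    (forall i, (i < size s)%N -> J s`_i) /\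
    x = \sum_(i < size s) c i * s`_i.

Definition nat_graded_ring (Rg : nat -> R -> Prop) : Prop :=
  [/\ (forall n, Rg n 0 /\ (forall x y, Rg n x -> Rg n y -> Rg n (x - y))),
      Rg 0%N 1,
      (forall i j a b, Rg i a -> Rg j b -> Rg (i + j)%N (a * b)),
      (forall r, exists (f : nat -> R) (N : nat),
          (forall i, Rg i (f i)) /\ r = \sum_(i < N) f i) &
      (forall (f : nat -> R) (N : nat), (forall i, Rg i (f i)) ->
          \sum_(i < N) f i = 0 -> forall i, (i < N)%N -> f i = 0)].

(* standard graded: R = R_0[R_1], i.e. R is generated as an R_0-algebra by R_1 *)
Definition standard_graded (Rg : nat -> R -> Prop) : Prop :=
  nat_graded_ring Rg /\
  forall S : R -> Prop,
    (forall x, Rg 0%N x -> S x) -> (forall x, Rg 1%N x -> S x) ->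
    (forall x y, S x -> S y -> S (x + y)) ->
    (forall x y, S x -> S y -> S (x * y)) ->
    forall r, S r.

Definition ideal0 (Rg : nat -> R -> Prop) (J : R -> Prop) : Prop :=
  [/\ (forall x, J x -> Rg 0%N x), J 0,
      (forall x y, J x -> J y -> J (x + y)) &
      (forall a x, Rg 0%N a -> J x -> J (a * x))].

Definition maximal0 (Rg : nat -> R -> Prop) (m : R -> Prop) : Prop :=
  [/\ ideal0 Rg m, ~ m 1 &
      forall J, ideal0 Rg J -> (forall x, m x -> J x) ->
        (forall x, J x <-> m x) \/ J 1].

Definition local0 (Rg : nat -> R -> Prop) (m : R -> Prop) : Prop :=
  maximal0 Rg m /\ forall n, maximal0 Rg n -> forall x, n x <-> m x.

Definition artinian0 (Rg : nat -> R -> Prop) : Prop :=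
  forall I : nat -> R -> Prop, (forall k, ideal0 Rg (I k)) ->
    (forall k x, I k.+1 x -> I k x) ->
    exists N, forall k, (N <= k)%N -> forall x, I k x <-> I N x.

Variable M : lmodType R.

Definition graded_module (Rg : nat -> R -> Prop) (Mg : int -> M -> Prop) : Prop :=
  [/\ (forall n, Mg n 0 /\ (forall x y, Mg n x -> Mg n y -> Mg n (x - y))),
      (forall i n a x, Rg i a -> Mg n x -> Mg (n + i%:Z)%R (a *: x)),
      (forall x, exists (f : int -> M) (s : seq int),
          uniq s /\ (forall n, Mg n (f n)) /\ x = \sum_(n <- s) f n) &
      (forall (f : int -> M) (s : seq int), uniq s -> (forall n, Mg n (f n)) ->
          \sum_(n <- s) f n = 0 -> forall n, n \in s -> f n = 0)].

Definition fin_gen_module : Prop :=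
  exists s : seq M, forall x, exists c : nat -> R,
    x = \sum_(i < size s) c i *: s`_i.

Definition ann (x : M) (r : R) : Prop := r *: x = 0.

Definition Ass (P : R -> Prop) : Prop :=
  prime_ideal P /\ exists x : M, forall r, P r <-> ann x r.

End CommAlg.

From HB Require Import structures.
From mathcomp Require Import all_boot all_order all_algebra.
From Stdlib Require Import Classical ClassicalEpsilon.
Import Order.TTheory GRing.Theory Num.Theory.
Set Implicit Arguments. Unset Strict Implicit. Unset Printing Implicit Defensive.
Local Open Scope ring_scope.

(* Let x be a nonzero element of M_t whose annihilator is maximal among the
   annihilators of nonzero elements of M_t; such an x exists since R is
   Noetherian (maximum condition on ideals).  We show (0 :_R x) = mR.
   - For b in R_0 with b x <> 0, b x is again a nonzero element of M_t and
     (0 :_R x) ⊆ (0 :_R b x), so by maximality these agree.  Hence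
     R_0 ∩ (0 :_R x) is a prime ideal of R_0, hence maximal because R_0 is
     Artinian, hence equal to m because R_0 is local.  So mR ⊆ (0 :_R x).
   - Conversely (0 :_R x) is contained in an associated prime of M (a maximal
     annihilator among nonzero multiples of x is prime), and the only
     associated prime is mR. *)

Section NoetherianRing.
Variable R : comNzRingType.

Lemma ideal_lin_comb (I : R -> Prop) (s : seq R) (c : nat -> R) :
  is_ideal I -> (forall i, (i < size s)%N -> I s`_i) ->
  I (\sum_(i < size s) c i * s`_i).
Proof.
move=> [I0 ID IM] Is; apply: (big_ind I) => // i _.
exact/IM/Is.
Qed.

Lemma ideal_gen_seq_nth (s : seq R) i :
  (i < size s)%N -> ideal_gen_seq s s`_i.
Proof.
move=> lt_is; exists (fun j => (j == i)%:R).
rewrite (bigD1 (Ordinal lt_is)) //= eqxx mul1r big1 ?addr0 // => j ne_ji.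
by rewrite (_ : (nat_of_ord j == i) = false) ?mul0r //; apply/negbTE.
Qed.

Section Chain.
Variables (I : nat -> R -> Prop).
Hypothesis I_incr : forall k r, I k r -> I k.+1 r.

Lemma chain_le k l r : (k <= l)%N -> I k r -> I l r.
Proof.
move=> /subnKC <-; elim: (l - k)%N => [|d IH] Ikr; first by rewrite addn0.
by rewrite addnS; apply/I_incr/IH.
Qed.

Lemma chain_common_bound (n : nat) (g : nat -> R) :
  (forall i, (i < n)%N -> exists k, I k (g i)) ->
  exists K, forall i, (i < n)%N -> I K (g i).
Proof.
elim: n => [|n IH] Hg; first by exists 0%N.
have [K1 HK1] := IH (fun i lt_in => Hg i (ltnW lt_in)).
have [k2 Hk2] := Hg n (ltnSn n).
exists (maxn K1 k2) => i; rewrite ltnS leq_eqVlt => /orP [/eqP -> | lt_in].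
  exact: chain_le (leq_maxr _ _) Hk2.
exact: chain_le (leq_maxl _ _) (HK1 i lt_in).
Qed.

(* Ascending chain condition: in a Noetherian ring an increasing chain of
   ideals stops growing, since its union is finitely generated. *)
Lemma noetherian_acc : noetherian R -> (forall k, is_ideal (I k)) ->
  exists N, forall r, I N.+1 r -> I N r.
Proof.
move=> noethR idealI; pose U r := exists k, I k r.
have idealU : is_ideal U.
  split; first by exists 0%N; case: (idealI 0%N).
  - move=> a b [k1 Ha] [k2 Hb]; exists (maxn k1 k2).
    have [_ ID _] := idealI (maxn k1 k2).
    by apply: ID; [apply: chain_le (leq_maxl _ _) Ha | apply: chain_le (leq_maxr _ _) Hb].
  - by move=> r a [k Ha]; exists k; have [_ _ IM] := idealI k; exact: IM.
have [s gen_s] := noethR U idealU.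
have [K HK] := @chain_common_bound (size s) (nth 0 s)
  (fun i lt_is => (gen_s s`_i).2 (ideal_gen_seq_nth lt_is)).
exists K => r IKr; have /gen_s [c ->] : U r by exists K.+1.
exact: ideal_lin_comb (idealI K) HK.
Qed.
End Chain.

End NoetherianRing.

Section Annihilators.
Variables (R : comNzRingType) (M : lmodType R).
Implicit Types (x w : M) (Q S : M -> Prop).

Lemma ann_ideal x : is_ideal (ann x).
Proof.
rewrite /ann; split; first by rewrite scale0r.
- by move=> a b Ha Hb; rewrite scalerDl Ha Hb addr0.
- by move=> r a Ha; rewrite -scalerA Ha scaler0.
Qed.

Lemma ann_scale x b r : ann (b *: x) r <-> ann x (r * b).
Proof. by rewrite /ann scalerA. Qed.

Lemma ann_scale_sub x b r : ann x r -> ann (b *: x) r.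
Proof.
move=> Hr; apply/ann_scale; rewrite mulrC.
by have [_ _ annM] := ann_ideal x; apply: annM.
Qed.

Lemma ann_ext_ideal (J : R -> Prop) x :
  (forall r, J r -> ann x r) -> forall r, ext_ideal J r -> ann x r.
Proof.
move=> sub_J r [s [c [Js ->]]]; apply: ideal_lin_comb (ann_ideal x) _.
by move=> i /Js /sub_J.
Qed.

Definition ann_maximal Q w : Prop :=
  Q w /\ forall w', Q w' -> (forall r, ann w r -> ann w' r) ->
                           forall r, ann w' r -> ann w r.

(* Noetherian rings satisfy the maximum condition on annihilators: otherwise
   dependent choice yields a strictly increasing chain of annihilator ideals. *)
Lemma exists_ann_maximal Q : noetherian R -> (exists w, Q w) ->
  exists w, ann_maximal Q w.
Proof.
move=> noethR [w0 Qw0]; apply: NNPP => no_max.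
have grow (w : {w | Q w}) : {w' : {w | Q w} |
    (forall r, ann (sval w) r -> ann (sval w') r) /\
    exists r, ann (sval w') r /\ ~ ann (sval w) r}.
  apply: constructive_indefinite_description; apply: NNPP => no_grow.
  apply: no_max; exists (sval w); split; first exact: svalP.
  move=> w' Qw' sub_w r Hr; apply: NNPP => Hnr.
  by apply: no_grow; exists (exist _ w' Qw'); split => //; exists r.
pose step u := sval (grow u); pose chain k := sval (iter k step (exist _ w0 Qw0)).
have chain_incr k r : ann (chain k) r -> ann (chain k.+1) r.
  by rewrite /chain /= /step; case: (grow _) => /= w' [sub_w' _]; apply: sub_w'.
have [N stopN] := @noetherian_acc _ (fun k => ann (chain k)) chain_incr noethR
  (fun k => ann_ideal (chain k)).
have [_ [r [HrN1 HrN]]] := svalP (grow (iter N step (exist _ w0 Qw0))).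
exact/HrN/stopN.
Qed.

(* Maximality of ann x among nonzero elements of S turns ann x into a
   "prime along S": if b x stays in S and is nonzero, ann (b x) = ann x. *)
Lemma ann_maximal_colon S x a b :
  ann_maximal (fun w => S w /\ w != 0) x -> S (b *: x) -> ~ ann x b ->
  ann x (a * b) -> ann x a.
Proof.
move=> [_ max_x] Sbx Hnb Hab; apply: (max_x (b *: x)).
- by split => //; apply/eqP.
- exact: ann_scale_sub.
- exact/ann_scale.
Qed.

Lemma ann_maximal_prime S w : (forall b v, S v -> S (b *: v)) ->
  ann_maximal (fun v => S v /\ v != 0) w -> prime_ideal (ann w).
Proof.
move=> S_scale max_w; have [[Sw w0] _] := max_w.
split; first exact: ann_ideal.
  by rewrite /ann scale1r; apply/eqP.
move=> a b Hab; case: (classic (ann w b)) => Hb; [by right | left].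
exact: ann_maximal_colon max_w (S_scale b w Sw) Hb Hab.
Qed.

Lemma ann_sub_Ass x : noetherian R -> x != 0 ->
  exists P, Ass M P /\ forall r, ann x r -> P r.
Proof.
move=> noethR x0; pose S v := exists s, v = s *: x.
have S_scale b v : S v -> S (b *: v) by move=> [s ->]; exists (b * s); rewrite scalerA.
have [w max_w] := exists_ann_maximal (Q := fun v => S v /\ v != 0) noethR
  (ex_intro _ x (conj (ex_intro _ 1 (esym (scale1r x))) x0)).
exists (ann w); split.
  by split; [exact: ann_maximal_prime S_scale max_w | exists w].
by have [[[s ->] _] _] := max_w; exact: ann_scale_sub.
Qed.

End Annihilators.

Section DegreeZero.
Variables (R : comNzRingType) (Rg : nat -> R -> Prop).
Hypothesis graded : nat_graded_ring Rg.

Lemma R0_sub a b : Rg 0%N a -> Rg 0%N b -> Rg 0%N (a - b).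
Proof. by case: graded => /(_ 0%N) [_ subRg] _ _ _ _; apply: subRg. Qed.

Lemma R0_0 : Rg 0%N 0.
Proof. by case: graded => /(_ 0%N) []. Qed.

Lemma R0_add a b : Rg 0%N a -> Rg 0%N b -> Rg 0%N (a + b).
Proof. by move=> Ha Hb; have := R0_sub Ha (R0_sub R0_0 Hb); rewrite sub0r opprK. Qed.

Lemma R0_mul a b : Rg 0%N a -> Rg 0%N b -> Rg 0%N (a * b).
Proof. by case: graded => _ _ mulRg _ _; apply: (mulRg 0%N 0%N). Qed.

Lemma R0_exp b k : Rg 0%N b -> Rg 0%N (b ^+ k).
Proof.
move=> Hb; elim: k => [|k IH]; first by rewrite expr0; case: graded.
by rewrite exprS; apply: R0_mul.
Qed.

Definition prime0 (P : R -> Prop) : Prop :=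
  [/\ ideal0 Rg P, ~ P 1 &
      forall a b, Rg 0%N a -> Rg 0%N b -> P (a * b) -> P a \/ P b].

Section ArtinianPrime.
Variable P : R -> Prop.
Hypotheses (artR0 : artinian0 Rg) (primeP : prime0 P).

(* Modulo a prime of an Artinian ring every element outside it is a unit:
   the chain b^k R_0 + P stabilises, so b^N = b^(N+1) u + p, and since
   b^N is not in P the factor 1 - b u of (1 - b u) b^N = p must be. *)
Lemma artinian0_unit_mod_prime b : Rg 0%N b -> ~ P b ->
  exists2 u, Rg 0%N u & P (1 - b * u).
Proof.
have [[P_R0 P0 PD PM] P1 P_prime] := primeP.
move=> Hb Pnb; pose I k r := exists u p, [/\ Rg 0%N u, P p & r = b ^+ k * u + p].
have idealI k : ideal0 Rg (I k).
  split.
  - by move=> _ [u [p [Hu Hp ->]]]; apply/R0_add/P_R0/Hp/R0_mul/Hu/R0_exp.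
  - by exists 0, 0; rewrite mulr0 addr0; split=> //; apply: R0_0.
  - move=> _ _ [u1 [p1 [Hu1 Hp1 ->]]] [u2 [p2 [Hu2 Hp2 ->]]].
    exists (u1 + u2), (p1 + p2); split; [exact: R0_add | exact: PD |].
    by rewrite mulrDr addrACA.
  - move=> a _ Ha [u [p [Hu Hp ->]]]; exists (a * u), (a * p).
    by split; [exact: R0_mul | exact: PM | rewrite mulrDr mulrCA].
have I_decr k r : I k.+1 r -> I k r.
  move=> [u [p [Hu Hp ->]]]; exists (b * u), p.
  by split=> //; [exact: R0_mul | rewrite exprSr mulrA].
have [N stopN] := artR0 idealI I_decr.
have [|u [p [Hu Hp Ep]]] := (stopN N.+1 (leqnSn N) (b ^+ N)).2.
  by exists 1, 0; rewrite mulr1 addr0; split=> //; case: graded.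
have PbN k : ~ P (b ^+ k).
  elim: k => [|k IH]; first by rewrite expr0.
  rewrite exprSr => /P_prime []; [exact: R0_exp | by [] | exact: IH | exact: Pnb].
exists u => //.
have Efac : (1 - b * u) * b ^+ N = p.
  have commute_bu : b * u * b ^+ N = b ^+ N.+1 * u by rewrite exprSr [LHS]mulrC mulrA.
  by rewrite mulrBl mul1r commute_bu {1}Ep addrAC subrr add0r.
have Hfac : Rg 0%N (1 - b * u) by apply: R0_sub; [case: graded | exact: R0_mul].
have [|//|/PbN []] := P_prime _ _ Hfac (R0_exp N Hb).
by rewrite -Efac in Hp.
Qed.

Lemma artinian0_prime0_maximal0 : maximal0 Rg P.
Proof.
have [idealP P1 _] := primeP; split=> // J [J_R0 _ JD JM] subPJ.
case: (classic (exists b, J b /\ ~ P b)) => [[b [Jb Pnb]] | J_subP].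
  right; have [u Hu P1bu] := artinian0_unit_mod_prime (J_R0 b Jb) Pnb.
  have := JD _ _ (subPJ _ P1bu) (JM u b Hu Jb).
  by rewrite mulrC subrK.
left=> r; split=> [Jr|]; last exact: subPJ.
by apply: NNPP => Pnr; apply: J_subP; exists r.
Qed.
End ArtinianPrime.

End DegreeZero.

(* If x has a maximal annihilator among the nonzero elements of a fixed degree
   t, then R_0 ∩ ann x is a prime of R_0: multiplying by b in R_0 keeps x in
   degree t, so ann x is closed under division by such b. *)
Lemma degree0_ann_prime (R : comNzRingType) (Rg : nat -> R -> Prop)
    (M : lmodType R) (Mg : int -> M -> Prop) (t : int) (x : M) :
  nat_graded_ring Rg -> graded_module Rg Mg ->
  ann_maximal (fun w => Mg t w /\ w != 0) x ->
  prime0 Rg (fun r => Rg 0%N r /\ ann x r).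
Proof.
move=> graded [_ scaleMg _ _] max_x; have [[Mtx x0] _] := max_x.
have [ann0 annD annM] := ann_ideal x.
split.
- split; first by move=> r [].
  + by split; [exact: R0_0 | exact: ann0].
  + by move=> a b [Ha Hxa] [Hb Hxb]; split; [exact: R0_add | exact: annD].
  + by move=> a b Ha [Hb Hxb]; split; [exact: R0_mul | exact: annM].
- by move=> [_]; rewrite /ann scale1r; apply/eqP.
move=> a b Ha Hb [_ Hxab]; case: (classic (ann x b)) => Hxb; [by right | left].
split=> //; apply: ann_maximal_colon max_x _ Hxb Hxab.
by have := scaleMg 0%N t b x Hb Mtx; rewrite addr0.
Qed.

Theorem lemma2p4 (R : comNzRingType) (Rg : nat -> R -> Prop) (m : R -> Prop)
    (M : lmodType R) (Mg : int -> M -> Prop) (t : int) :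
  standard_graded Rg ->
  noetherian R ->
  artinian0 Rg ->
  local0 Rg m ->
  prime_ideal (ext_ideal m) ->
  graded_module Rg Mg ->
  fin_gen_module M ->
  (forall P : R -> Prop, Ass M P <-> (forall r, P r <-> ext_ideal m r)) ->
  (exists x : M, Mg t x /\ x != 0) ->
  exists x : M, Mg t x /\ (forall r : R, ann x r <-> ext_ideal m r).
Proof.
move=> [graded _] noethR artR0 [_ m_unique] _ gradedM _ Ass_m [y [Mty y0]].
have [x max_x] := exists_ann_maximal (Q := fun w => Mg t w /\ w != 0) noethR
  (ex_intro _ y (conj Mty y0)).
have [[Mtx x0] _] := max_x.
have maximal_P0 := artinian0_prime0_maximal0 graded artR0
  (degree0_ann_prime graded gradedM max_x).
have m_ann r : m r -> ann x r by move=> /(m_unique _ maximal_P0 r) [].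
exists x; split=> // r; split; last exact: ann_ext_ideal m_ann r.
have [P [AssP ann_P]] := ann_sub_Ass noethR x0.
by move=> /ann_P; apply: ((Ass_m P).1 AssP r).1.
Qed.
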